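(* Let $G$ be a finite subset of $\mathbf M$ with $\{(\mathbf e_1,f_1),\dots,(\mathbf e_m,f_m)\}\subset G$, and let $(\mathbf u,f)\in\mathbf M$. Suppose that for every critical pair $[t_g(\mathbf v,g),t_h(\mathbf w,h)]$ of $G$ with $\mathrm{lpp}(\mathbf u)\succeq\mathrm{lpp}(t_g\mathbf v)$, the S-polynomial of this critical pair has a standard representation w.r.t. $G$. Then $(\mathbf u,f)$ has a standard representation w.r.t. $G$.
   Context: Let $R=K[x_1,\dots,x_n]$ over a field $K$, $f_1,\dots,f_m\in R$, $\mathbf f=(f_1,\dots,f_m)$, $\mathbf e_i$ the $i$-th unit vector of $R^m$, and $\mathbf M=\{(\mathbf u,f)\in R^m\times R:\mathbf u\cdot\mathbf f=f\}$. Fix an arbitrary term order $\prec$ on the power products of $R$ and an arbitrary term order $\prec$ on the terms $x^\alpha\mathbf e_i$ of $R^m$. $\mathrm{lpp}$ denotes leading power product (leading term for vectors), $\mathrm{lc}$ leading coefficient; $\mathrm{lpp}(0)=0$ is smaller than every nonzero power product/term. For $(\mathbf u,f),(\mathbf v,g)\in\mathbf M$ with $f,g\neq0$, let $t=\mathrm{lcm}(\mathrm{lpp}(f),\mathrm{lpp}(g))$, $t_f=t/\mathrm{lpp}(f)$, $t_g=t/\mathrm{lpp}(g)$; if $\mathrm{lpp}(t_f\mathbf u)\succeq\mathrm{lpp}(t_g\mathbf v)$, then $[t_f(\mathbf u,f),t_g(\mathbf v,g)]$ is a critical pair (of $G$ if both elements lie in $G$) with S-polynomial $t_f(\mathbf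 u,f)-c\,t_g(\mathbf v,g)$, $c=\mathrm{lc}(f)/\mathrm{lc}(g)$. An element $(\mathbf u,f)\in\mathbf M$ has a standard representation w.r.t. $B\subset\mathbf M$ if $(\mathbf u,f)=\sum_{i=1}^s p_i(\mathbf v_i,g_i)$ with $(\mathbf v_i,g_i)\in B$, $p_i\in R$, $\mathrm{lpp}(\mathbf u)\succeq\mathrm{lpp}(p_i\mathbf v_i)$ and $\mathrm{lpp}(f)\succeq\mathrm{lpp}(p_ig_i)$ for all $i$. *)

From HB Require Import structures.
From mathcomp Require Import all_boot all_order all_algebra.
Set Implicit Arguments. Unset Strict Implicit. Unset Printing Implicit Defensive.
Import GRing.Theory.
Local Open Scope ring_scope.

Fixpoint mp (K : fieldType) (n : nat) : comNzRingType :=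
  if n is n'.+1 then ({poly mp K n'} : comNzRingType) else (K : comNzRingType).

Definition mon (n : nat) := n.-tuple nat.

Definition mzero (n : nat) : mon n := [tuple of nseq n 0%N].
Definition madd n (a b : mon n) : mon n := [tuple (tnth a i + tnth b i)%N | i < n].
Definition msub n (a b : mon n) : mon n := [tuple (tnth a i - tnth b i)%N | i < n].
Definition mlcm n (a b : mon n) : mon n := [tuple maxn (tnth a i) (tnth b i) | i < n].

Section Poly.
Variable K : fieldType.

(* coefficient of x^alpha in p; the last variable is the outermost one *)
Fixpoint mcoef (n : nat) : mp K n -> mon n -> K :=
  match n return mp K n -> mon n -> K with
  | 0 => fun p _ => p
  | n'.+1 => fun (p : {poly mp K n'}) (t : mon n'.+1) =>
      mcoef (p`_(thead t)) [tuple of behead t]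
  end.

Fixpoint mmono (n : nat) : mon n -> mp K n :=
  match n return mon n -> mp K n with
  | 0 => fun _ => (1 : K)
  | n'.+1 => fun t => ((mmono [tuple of behead t])%:P * 'X^(thead t) : {poly mp K n'})
  end.

Fixpoint mconst (n : nat) : K -> mp K n :=
  match n return K -> mp K n with
  | 0 => fun c => c
  | n'.+1 => fun c => ((mconst n' c)%:P : {poly mp K n'})
  end.

Fixpoint msupp (n : nat) : mp K n -> seq (mon n) :=
  match n return mp K n -> seq (mon n) with
  | 0 => fun p => if p != 0 then [:: [tuple]] else [::]
  | n'.+1 => fun (p : {poly mp K n'}) =>
      flatten [seq [seq [tuple of i :: tval t] | t <- msupp (p`_i)]
              | i <- iota 0 (size p)]
  end.
End Poly.

(* extension of an order to option values: None plays the role of lpp(0) = 0,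
   smaller than every power product / term *)
Definition ole (T : Type) (le : rel T) (x y : option T) : bool :=
  match x, y with
  | None, _ => true
  | Some _, None => false
  | Some a, Some b => le a b
  end.

Definition omax (T : Type) (le : rel T) (x y : option T) : option T :=
  match x, y with
  | None, _ => y
  | _, None => x
  | Some a, Some b => if le a b then Some b else Some a
  end.

Definition seqmax (T : Type) (le : rel T) (s : seq T) : option T :=
  foldr (fun t acc => omax le (Some t) acc) None s.

Definition term_order (n : nat) (le : rel (mon n)) : Prop :=
  [/\ reflexive le, antisymmetric le, transitive le & total le] /\
  [/\ (forall a, le (mzero n) a) &
      (forall a b c, le a b -> le (madd a c) (madd b c))].

(* term order on the terms x^alpha e_i of R^m *)
Definition modterm_order (n m : nat) (le : rel (mon n * 'I_m)) : Prop :=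
  [/\ reflexive le, antisymmetric le, transitive le & total le] /\
  [/\ (forall a i c, le (a, i) (madd a c, i)) &
      (forall a i b j c, le (a, i) (b, j) -> le (madd a c, i) (madd b c, j))].

Section Module.
Variables (K : fieldType) (n m : nat).
Local Notation R := (mp K n).
Definition vec := {ffun 'I_m -> R}.

Definition lpp (le : rel (mon n)) (p : R) : option (mon n) := seqmax le (msupp p).

Definition lc (le : rel (mon n)) (p : R) : K :=
  if lpp le p is Some t then mcoef p t else 0.

Definition lppv (lev : rel (mon n * 'I_m)) (u : vec) : option (mon n * 'I_m) :=
  seqmax lev [seq (t, i) | i <- enum 'I_m, t <- msupp (u i)].

Definition unitv (i : 'I_m) : vec := [ffun j => (i == j)%:R].
Definition dotv (u : vec) (fs : 'I_m -> R) : R := \sum_(i < m) u i * fs i.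
Definition scalev (p : R) (u : vec) : vec := [ffun i => p * u i].

Definition inM (fs : 'I_m -> R) (x : vec * R) : Prop := dotv x.1 fs = x.2.

Definition mulpair (p : R) (x : vec * R) : vec * R := (scalev p x.1, p * x.2).

Definition std_rep (le : rel (mon n)) (lev : rel (mon n * 'I_m))
    (B : seq (vec * R)) (x : vec * R) : Prop :=
  exists s : seq (R * (vec * R)),
    [/\ (forall q, q \in s -> q.2 \in B),
        x.1 = \sum_(q <- s) scalev q.1 q.2.1,
        x.2 = \sum_(q <- s) q.1 * q.2.2 &
        (forall q, q \in s ->
           ole lev (lppv lev (scalev q.1 q.2.1)) (lppv lev x.1)
           /\ ole le (lpp le (q.1 * q.2.2)) (lpp le x.2))].

(* data of a critical pair built from (v,g) and (w,h):
   t = lcm(lpp g, lpp h), t_g = t / lpp g, t_h = t / lpp h *)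
Definition tfac (le : rel (mon n)) (g h : R) : mon n :=
  match lpp le g, lpp le h with
  | Some a, Some b => msub (mlcm a b) a
  | _, _ => mzero n
  end.

Definition is_crit_pair (le : rel (mon n)) (lev : rel (mon n * 'I_m))
    (x y : vec * R) : bool :=
  [&& x.2 != 0, y.2 != 0 &
      ole lev (lppv lev (scalev (mmono K (tfac le y.2 x.2)) y.1))
              (lppv lev (scalev (mmono K (tfac le x.2 y.2)) x.1))].

Definition spair (le : rel (mon n)) (x y : vec * R) : vec * R :=
  let c := lc le x.2 / lc le y.2 in
  let a := mulpair (mmono K (tfac le x.2 y.2)) x in
  let b := mulpair (@mconst K n c * mmono K (tfac le y.2 x.2)) y in
  (a.1 - b.1, a.2 - b.2).
End Module.

From HB Require Import structures.
From mathcomp Require Import all_boot all_order all_algebra zify ring.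
From Stdlib Require Import Classical ClassicalEpsilon.
Set Implicit Arguments. Unset Strict Implicit. Unset Printing Implicit Defensive.
Import GRing.Theory.
Local Open Scope ring_scope.

(* Write (u, f) = sum_i u_i (e_i, f_i): each summand p (v, g) satisfies
   lpp(p v) <= lpp(u). Among representations with this property, induct on the
   largest power product tau of the products p g (term orders are well founded by
   Dickson's lemma) and then on the number of summands reaching tau. If
   tau <= lpp(f) the representation is standard. Otherwise the x^tau terms cancel,
   so two summands p (v, g) and q (w, h) reach tau and, in some order, form a
   critical pair. With M = lc(p) x^(tau / lcm(lpp g, lpp h)) we have
   M t_g = lt(p), so
     p (v, g) + q (w, h) = (p - lt p) (v, g) + (q + M c t_h) (w, h) + M S,
   S the S-polynomial. Substituting the standard representation of S leaves at most
   one summand reaching tau, and all vector parts stay below lpp(u) because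
   lpp(t_g v), shifted by tau / lcm, is lpp(lt(p) v) <= lpp(p v). *)

HB.instance Definition _ (n : nat) := Equality.copy (mon n) (n.-tuple nat).

Definition mdiv n (a t : mon n) : bool := [forall i, tnth a i <= tnth t i]%N.

Section Monomials.
Variable n : nat.
Implicit Types a b c s t : mon n.

Lemma tnth_madd a b i : tnth (madd a b) i = (tnth a i + tnth b i)%N.
Proof. by rewrite tnth_mktuple. Qed.

Lemma tnth_msub a b i : tnth (msub a b) i = (tnth a i - tnth b i)%N.
Proof. by rewrite tnth_mktuple. Qed.

Lemma tnth_mlcm a b i : tnth (mlcm a b) i = maxn (tnth a i) (tnth b i).
Proof. by rewrite tnth_mktuple. Qed.

Lemma tnth_mzero i : tnth (mzero n) i = 0%N.
Proof. by rewrite tnth_nseq. Qed.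

Lemma maddC a b : madd a b = madd b a.
Proof. by apply: eq_from_tnth => i; rewrite !tnth_madd addnC. Qed.

Lemma maddA a b c : madd a (madd b c) = madd (madd a b) c.
Proof. by apply: eq_from_tnth => i; rewrite !tnth_madd addnA. Qed.

Lemma madd0m a : madd (mzero n) a = a.
Proof. by apply: eq_from_tnth => i; rewrite tnth_madd tnth_mzero. Qed.

Lemma maddIm a b c : madd b a = madd c a -> b = c.
Proof.
move=> e; apply: eq_from_tnth => i.
by have := congr1 (fun t => tnth t i) e; rewrite !tnth_madd; apply: addIn.
Qed.

Lemma mlcmC a b : mlcm a b = mlcm b a.
Proof. by apply: eq_from_tnth => i; rewrite !tnth_mlcm maxnC. Qed.

Lemma mdiv_madd s t : mdiv t (madd s t).
Proof. by apply/forallP => i; rewrite tnth_madd leq_addl. Qed.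

Lemma msub_madd s t : msub (madd s t) t = s.
Proof. by apply: eq_from_tnth => i; rewrite tnth_msub tnth_madd addnK. Qed.

Lemma msubK t s : mdiv t s -> madd (msub s t) t = s.
Proof.
by move/forallP => h; apply: eq_from_tnth => i; rewrite tnth_madd tnth_msub subnK.
Qed.

Lemma mdiv_msub_eq0 t a : mdiv a t && (msub t a == mzero n) = (t == a).
Proof.
apply/andP/eqP => [[/forallP ha /eqP e]|->]; last first.
  split; first by apply/forallP.
  by apply/eqP/eq_from_tnth => i; rewrite tnth_msub tnth_mzero subnn.
apply: eq_from_tnth => i; have /eqP := congr1 (fun t => tnth t i) e.
by rewrite tnth_msub tnth_mzero subn_eq0 => h; apply/eqP; rewrite eqn_leq h ha.
Qed.

Lemma mlcm_msubK a b : madd a (msub (mlcm a b) a) = mlcm a b.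
Proof.
by apply: eq_from_tnth => i; rewrite tnth_madd tnth_msub tnth_mlcm; lia.
Qed.

(* If a c = b d then t := a c is a multiple of lcm(a, b) = L, and the
   cofactor c splits as (L / a) (t / L). *)
Lemma mlcm_cofactor a b c d : madd a c = madd b d ->
  madd (msub (mlcm a b) a) (msub (madd a c) (mlcm a b)) = c.
Proof.
move=> e; apply: eq_from_tnth => i; have := congr1 (fun t => tnth t i) e.
by rewrite !(tnth_madd, tnth_msub, tnth_mlcm); lia.
Qed.

Lemma mlcm_msubKr a b c d : madd a c = madd b d ->
  madd (mlcm a b) (msub (madd a c) (mlcm a b)) = madd a c.
Proof.
move=> e; apply: eq_from_tnth => i; have := congr1 (fun t => tnth t i) e.
by rewrite !(tnth_madd, tnth_msub, tnth_mlcm); lia.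
Qed.
End Monomials.

Lemma ex_min_nat (P : nat -> Prop) :
  (exists v, P v) -> exists v, P v /\ forall w, P w -> (v <= w)%N.
Proof.
case=> v; elim/ltn_ind: v => v IH Pv.
have [[w [Pw ltwv]]|nosmaller] := classic (exists w, P w /\ (w < v)%N).
  exact: IH ltwv Pw.
exists v; split=> // w Pw; rewrite leqNgt; apply/negP => ltwv.
by apply: nosmaller; exists w.
Qed.

Lemma nondecreasing_subseq (g : nat -> nat) : exists phi : nat -> nat,
  (forall i, phi i < phi i.+1)%N /\ (forall i, g (phi i) <= g (phi i.+1))%N.
Proof.
have minP k : exists i, (k <= i)%N /\ forall j, (k <= j)%N -> (g i <= g j)%N.
  have [v [[j [kj <-]] minv]] := @ex_min_nat (fun v => exists j, (k <= j)%N /\ g j = v)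
    (ex_intro _ (g k) (ex_intro _ k (conj (leqnn k) erefl))).
  by exists j; split=> // j' kj'; apply: minv; exists j'.
pose next k := proj1_sig (constructive_indefinite_description _ (minP k)).
have nextP k : (k <= next k)%N /\ forall j, (k <= j)%N -> (g (next k) <= g j)%N.
  exact: proj2_sig (constructive_indefinite_description _ (minP k)).
pose phi := fix phi i := if i is i'.+1 then next (phi i').+1 else next 0%N.
have phiS i : (phi i < phi i.+1)%N by rewrite /= (proj1 (nextP _)).
exists phi; split=> // -[|i]; first exact: (proj2 (nextP 0%N)).
by apply: (proj2 (nextP _)); apply: leq_trans (phiS i) (ltnW (phiS i.+1)).
Qed.

Lemma dickson (F : nat -> nat -> nat) k : exists phi : nat -> nat,
  (forall i, phi i < phi i.+1)%N /\
  (forall c i, c < k -> F (phi i) c <= F (phi i.+1) c)%N.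
Proof.
elim: k => [|k [phi [phiS Fphi]]]; first by exists id.
have [psi [psiS Fpsi]] := nondecreasing_subseq (fun i => F (phi i) k).
have phi_mono : {homo phi : i j / (i < j)%N}.
  by apply: homo_ltn => // y x z; apply: ltn_trans.
exists (phi \o psi); split=> [i|c i]; first exact: phi_mono.
rewrite ltnS leq_eqVlt => /orP [/eqP ->|ltck]; first exact: Fpsi.
have Fc_mono : {homo (fun j => F (phi j) c) : i j / (i <= j)%N >-> (i <= j)%N}.
  by apply: homo_leq => [//|y x z|j]; [apply: leq_trans | apply: Fphi].
exact/Fc_mono/ltnW.
Qed.

Lemma term_order_wf n (le : rel (mon n)) :
  term_order le -> well_founded (fun a b => ~~ le b a).
Proof.
case=> -[le_refl _ le_trans le_total] [le0 leD] a; apply: NNPP => nAcc_a.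
pose lt a b := ~~ le b a.
have stepE (x : {x | ~ Acc lt x}) : exists y : {y | ~ Acc lt y}, lt (sval y) (sval x).
  case: x => x nAcc_x /=; apply: NNPP => noy; apply: nAcc_x; constructor => y lt_yx.
  by apply: NNPP => nAcc_y; apply: noy; exists (exist _ y nAcc_y).
pose step x := proj1_sig (constructive_indefinite_description _ (stepE x)).
pose s := fix s i := if i is i'.+1 then step (s i') else exist _ a nAcc_a.
pose f i := sval (s i).
have fS i : lt (f i.+1) (f i) by exact: proj2_sig (constructive_indefinite_description _ (stepE _)).
have f_decr : {homo f : i j / (i <= j)%N >-> le j i}.
  apply: (@homo_leq _ f (fun x y => le y x)) => [x|y x z /= h1 h2|i] //.
    exact: le_trans h1.
  by have := le_total (f i) (f i.+1); rewrite (negbTE (fS i)).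
have [phi [phiS Fphi]] := dickson (fun i c => nth 0%N (f i) c) n.
have f01 : le (f (phi 0%N)) (f (phi 1%N)).
  rewrite -(msubK (t := f (phi 0%N)) (s := f (phi 1%N))); last first.
    by apply/forallP => c; rewrite !(tnth_nth 0%N); apply: Fphi.
  by rewrite -{1}(madd0m (f _)) leD.
by move/negP: (fS (phi 0%N)); apply; apply: le_trans f01 (f_decr _ _ (phiS 0%N)).
Qed.

Section ConsTuple.
Variable n : nat.
Implicit Types a b t : mon n.+1.

Lemma tnth_behead_tuple a (j : 'I_n) : tnth [tuple of behead a] j = tnth a (lift ord0 j).
Proof. by rewrite tnth_behead; congr tnth; apply/val_inj; rewrite /= inordK // ltnS. Qed.

Lemma cons_tupleE t : t = [tuple of thead t :: tval [tuple of behead t]].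
Proof. by apply: val_inj; case: t => -[|x s] //= _; rewrite /thead (tnth_nth 0%N). Qed.

Lemma behead_cons_tuple i (t : mon n) : [tuple of behead [tuple of i :: tval t]] = t.
Proof. exact: val_inj. Qed.

Lemma thead_behead_inj a b :
  thead a = thead b -> [tuple of behead a] = [tuple of behead b] -> a = b.
Proof. by move=> e1 e2; rewrite (cons_tupleE a) (cons_tupleE b) e1 e2. Qed.

Lemma thead_madd a b : thead (madd a b) = (thead a + thead b)%N.
Proof. exact: tnth_madd. Qed.

Lemma thead_msub a b : thead (msub a b) = (thead a - thead b)%N.
Proof. exact: tnth_msub. Qed.

Lemma thead_mzero : thead (mzero n.+1) = 0%N.
Proof. exact: tnth_mzero. Qed.

Lemma behead_madd a b :
  [tuple of behead (madd a b)] = madd [tuple of behead a] [tuple of behead b].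
Proof. by apply: eq_from_tnth => i; rewrite tnth_madd !tnth_behead_tuple tnth_madd. Qed.

Lemma behead_msub a b :
  [tuple of behead (msub a b)] = msub [tuple of behead a] [tuple of behead b].
Proof. by apply: eq_from_tnth => i; rewrite tnth_msub !tnth_behead_tuple tnth_msub. Qed.

Lemma behead_mzero : [tuple of behead (mzero n.+1)] = mzero n.
Proof. by apply: eq_from_tnth => i; rewrite tnth_behead_tuple !tnth_mzero. Qed.

Lemma mdiv_cons a t :
  mdiv a t = (thead a <= thead t)%N && mdiv [tuple of behead a] [tuple of behead t].
Proof.
apply/forallP/andP => [h|[h0 /forallP hs] i].
  by split; [exact: h | apply/forallP => i; rewrite !tnth_behead_tuple].
by case: (unliftP ord0 i) => [j ->|->] //; have := hs j; rewrite !tnth_behead_tuple.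
Qed.
End ConsTuple.

Section Coefficients.
Variable K : fieldType.

Lemma mcoefD n (p q : mp K n) t : mcoef (p + q) t = mcoef p t + mcoef q t.
Proof. by elim: n p q t => [//|n IH] p q t /=; rewrite coefD IH. Qed.

Lemma mcoef0 n t : mcoef (0 : mp K n) t = 0.
Proof. by elim: n t => [//|n IH] t /=; rewrite coef0 IH. Qed.

Lemma mcoefN n (p : mp K n) t : mcoef (- p) t = - mcoef p t.
Proof. by elim: n p t => [//|n IH] p t /=; rewrite coefN IH. Qed.

Lemma mcoefB n (p q : mp K n) t : mcoef (p - q) t = mcoef p t - mcoef q t.
Proof. by rewrite mcoefD mcoefN. Qed.

Lemma mcoef_sum n I (r : seq I) (F : I -> mp K n) t :
  mcoef (\sum_(i <- r) F i) t = \sum_(i <- r) mcoef (F i) t.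
Proof.
elim: r => [|i r IH]; first by rewrite !big_nil mcoef0.
by rewrite !big_cons mcoefD IH.
Qed.

Lemma mcoefCM n (c : K) (p : mp K n) t : mcoef (mconst n c * p) t = c * mcoef p t.
Proof. by elim: n p t => [//|n IH] p t /=; rewrite coefCM IH. Qed.

Lemma mconstM n (c d : K) : mconst n (c * d) = mconst n c * mconst n d.
Proof. by elim: n => [//|n IH] /=; rewrite IH polyCM. Qed.

Lemma mconst1 n : mconst n (1 : K) = 1.
Proof. by elim: n => //= n ->. Qed.

Lemma mmonoD n (a b : mon n) : mmono K (madd a b) = mmono K a * mmono K b.
Proof.
elim: n a b => [|n IH] a b /=; first by rewrite mulr1.
by rewrite behead_madd thead_madd IH polyCM exprD mulrACA.
Qed.

Lemma mcoefXM n (a : mon n) (p : mp K n) t :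
  mcoef (mmono K a * p) t = if mdiv a t then mcoef p (msub t a) else 0.
Proof.
elim: n a p t => [|n IH] a p t /=.
  have -> : mdiv a t by apply/forallP => -[].
  by rewrite mul1r.
rewrite -mulrA coefCM coefXnM IH mdiv_cons thead_msub behead_msub.
by case: ltnP => _; case: mdiv; rewrite ?mcoef0 ?andbF.
Qed.

Lemma mcoef1 n t : mcoef (1 : mp K n) t = (t == mzero n)%:R.
Proof.
elim: n t => [|n IH] t /=; first by rewrite (tuple0 t) (tuple0 (mzero 0)) eqxx.
have -> : (t == mzero n.+1) = (thead t == 0%N) && ([tuple of behead t] == mzero n).
  apply/eqP/andP => [->|[/eqP e1 /eqP e2]]; first by rewrite thead_mzero behead_mzero.
  by apply: thead_behead_inj; rewrite ?thead_mzero ?behead_mzero.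
by rewrite coef1; case: eqP => _ /=; rewrite ?IH ?mcoef0.
Qed.

Lemma mcoefCX n (c : K) (a : mon n) t :
  mcoef (mconst n c * mmono K a) t = if t == a then c else 0.
Proof.
rewrite mcoefCM -(mulr1 (mmono K a)) mcoefXM -mdiv_msub_eq0.
by case: mdiv; rewrite /= ?mcoef1 ?mulr0 //; case: (_ == _); rewrite ?mulr1 ?mulr0.
Qed.

Lemma mcoefX n (a : mon n) t : mcoef (mmono K a) t = (t == a)%:R.
Proof. by rewrite -[mmono K a]mul1r -(mconst1 n) mcoefCX; case: (t == a). Qed.

Lemma mem_msupp n (p : mp K n) t : (t \in msupp p) = (mcoef p t != 0).
Proof.
elim: n p t => [|n IH] p t /=.
  by rewrite (tuple0 t); case: (p != 0); rewrite ?inE // (tuple0 [tuple]).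
apply/flatten_mapP/idP => [[i _ /mapP [t' ht' ->]]|ht].
  by rewrite behead_cons_tuple -IH.
exists (thead t).
  by rewrite mem_iota add0n; case: ltnP ht => // ?; rewrite nth_default ?mcoef0 ?eqxx.
by apply/mapP; exists [tuple of behead t]; rewrite ?IH // -cons_tupleE.
Qed.

Lemma mcoefs_eq0 n (p : mp K n) : (forall t, mcoef p t = 0) -> p = 0.
Proof.
elim: n p => [|n IH] p p0 /=; first exact: p0 [tuple].
apply/polyP => i; rewrite coef0; apply: IH => t.
by have := p0 [tuple of i :: tval t]; rewrite /= behead_cons_tuple.
Qed.

Lemma mpolyE n (p : mp K n) :
  p = \sum_(t <- undup (msupp p)) mconst n (mcoef p t) * mmono K t.
Proof.
apply/eqP; rewrite -subr_eq0; apply/eqP/mcoefs_eq0 => s.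
rewrite mcoefB mcoef_sum; apply/eqP; rewrite subr_eq0; apply/eqP.
under eq_bigr do rewrite mcoefCX.
have [supp_s|nsupp_s] := boolP (s \in undup (msupp p)).
  rewrite (bigD1_seq s) ?undup_uniq //= eqxx big1 ?addr0 // => t.
  by rewrite eq_sym => /negbTE ->.
rewrite big1_seq => [|t /andP[_ ht]]; last by case: eqP ht nsupp_s => // -> ->.
by apply/eqP; move: nsupp_s; rewrite mem_undup mem_msupp negbK.
Qed.

Lemma mcoefM n (p q : mp K n) x : mcoef (p * q) x =
  \sum_(t <- undup (msupp p)) mcoef p t * (if mdiv t x then mcoef q (msub x t) else 0).
Proof.
rewrite {1}(mpolyE p) mulr_suml mcoef_sum; apply: eq_bigr => t _.
by rewrite -mulrA mcoefCM mcoefXM.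
Qed.

Lemma mcoefM_neq0 n (p q : mp K n) x : mcoef (p * q) x != 0 ->
  exists t s, [/\ mcoef p t != 0, mcoef q s != 0 & x = madd s t].
Proof.
rewrite mcoefM => /eqP pqx.
have /hasP [t _] : has (fun t => mcoef p t *
    (if mdiv t x then mcoef q (msub x t) else 0) != 0) (undup (msupp p)).
  by apply/negPn/negP => /hasPn h; apply: pqx; rewrite big1_seq // => t /andP[_ /h/negPn/eqP].
case: (boolP (mdiv t x)) => [t_x|]; last by rewrite mulr0 eqxx.
by rewrite mulf_eq0 negb_or => /andP [pt qs]; exists t, (msub x t); rewrite msubK.
Qed.

Lemma mcoefM_unique n (p q : mp K n) a b :
  mcoef p a != 0 -> mcoef q b != 0 ->
  (forall t s, mcoef p t != 0 -> mcoef q s != 0 -> madd s t = madd b a -> t = a) ->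
  mcoef (p * q) (madd b a) = mcoef p a * mcoef q b.
Proof.
move=> pa qb uniq_ab; rewrite mcoefM.
rewrite (bigD1_seq a) ?undup_uniq ?mem_undup ?mem_msupp //= mdiv_madd msub_madd.
rewrite big1 ?addr0 // => t /negP t_neq_a.
case: (boolP (mdiv t _)) => [t_x|]; last by rewrite mulr0.
have [->|pt] := eqVneq (mcoef p t) 0; first by rewrite mul0r.
have [->|qs] := eqVneq (mcoef q (msub (madd b a) t)) 0; first by rewrite mulr0.
by case: t_neq_a; apply/eqP/(uniq_ab _ _ pt qs); rewrite msubK.
Qed.
End Coefficients.

Definition total_order (T : eqType) (le : rel T) :=
  [/\ reflexive le, antisymmetric le, transitive le & total le].

Section OptionOrder.
Variables (T : eqType) (le : rel T).

Local Notation ole := (ole le).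
Local Notation omax := (omax le).
Local Notation seqmax := (seqmax le).
Definition olt x y := ~~ ole y x.

Lemma omax_le x y z : ole x z -> ole y z -> ole (omax x y) z.
Proof. by case: x y z => [a|] [b|] [c|] //=; case: ifP. Qed.

Lemma omax_eq x y : omax x y = x \/ omax x y = y.
Proof. by case: x y => [a|] [b|] /=; try case: ifP; auto. Qed.

Lemma seqmax_cons y s : seqmax (y :: s) = omax (Some y) (seqmax s).
Proof. by []. Qed.

Lemma seqmax_le s z : (forall x, x \in s -> ole (Some x) z) -> ole (seqmax s) z.
Proof.
elim: s => [//|y s IH] sz; apply: omax_le; first by apply: sz; rewrite mem_head.
by apply: IH => x xs; apply: sz; rewrite inE xs orbT.
Qed.

Lemma mem_seqmax s a : seqmax s = Some a -> a \in s.
Proof.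
elim: s => [//|y s IH]; rewrite seqmax_cons.
by case: (omax_eq (Some y) (seqmax s)) => -> [e]; rewrite inE ?e ?eqxx ?(IH e) ?orbT.
Qed.

Lemma seqmax_eq_None s : seqmax s = None -> s = [::].
Proof. by case: s => //= y s; case: (seqmax s) => //= b; case: ifP. Qed.

Hypothesis le_total_order : total_order le.
Let le_refl : reflexive le. Proof. by case: le_total_order. Qed.
Let le_anti : antisymmetric le. Proof. by case: le_total_order. Qed.
Let le_trans : transitive le. Proof. by case: le_total_order. Qed.
Let le_total : total le. Proof. by case: le_total_order. Qed.

Lemma ole_refl x : ole x x.
Proof. by case: x => //= a; apply: le_refl. Qed.

Lemma ole_trans y x z : ole x y -> ole y z -> ole x z.
Proof. by case: x y z => [a|] [b|] [c|] //=; apply: le_trans. Qed.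

Lemma ole_total x y : ole x y || ole y x.
Proof. by case: x y => [a|] [b|] //=; apply: le_total. Qed.

Lemma ole_anti x y : ole x y -> ole y x -> x = y.
Proof.
by case: x y => [a|] [b|] //= ab ba; rewrite (@le_anti a b) ?ab.
Qed.

Lemma ole_omaxl x y : ole x (omax x y).
Proof. by case: x y => [a|] [b|] /=; [case: ifP|..]; rewrite ?ole_refl. Qed.

Lemma ole_omaxr x y : ole y (omax x y).
Proof.
case: x y => [a|] [b|] //=; rewrite ?ole_refl //.
case: ifP => [_|ab]; rewrite ?ole_refl //.
by have /orP [|] := ole_total (Some a) (Some b); rewrite /= ?ab.
Qed.

Lemma seqmax_ge s x : x \in s -> ole (Some x) (seqmax s).
Proof.
elim: s => [//|y s IH]; rewrite inE => /orP [/eqP ->|xs]; first exact: ole_omaxl.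
exact: ole_trans (IH xs) (ole_omaxr _ _).
Qed.

Lemma olt_ole x y : olt x y -> ole x y.
Proof. by rewrite /olt => yx; have := ole_total x y; rewrite (negbTE yx) orbF. Qed.

Lemma ole_olt_trans y x z : ole x y -> olt y z -> olt x z.
Proof. by move=> xy /negP yz; apply/negP => zx; apply: yz; apply: ole_trans zx xy. Qed.

Lemma olt_neq x y : olt x y -> x != y.
Proof. by apply: contraL => /eqP ->; rewrite /olt negbK ole_refl. Qed.

Lemma seqmax_lt s a :
  (forall x, x \in s -> le x a) -> a \notin s -> olt (seqmax s) (Some a).
Proof.
move=> sa a_s; apply/negP => as_.
have sa' : ole (seqmax s) (Some a) by apply: seqmax_le.
by rewrite (mem_seqmax (ole_anti sa' as_)) in a_s.
Qed.
End OptionOrder.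

Lemma term_order_total n (le : rel (mon n)) : term_order le -> total_order le.
Proof. by case. Qed.

Section LeadingPowerProduct.
Variables (K : fieldType) (n : nat) (le : rel (mon n)).
Hypothesis le_term : term_order le.
Local Notation R := (mp K n).
Local Notation ole := (ole le).
Local Notation olt := (olt le).
Local Notation lpp := (lpp le).
Let le_tot := term_order_total le_term.
Let le_refl : reflexive le. Proof. by case: le_tot. Qed.
Let le_anti : antisymmetric le. Proof. by case: le_tot. Qed.
Let le_trans : transitive le. Proof. by case: le_tot. Qed.
Let le_total : total le. Proof. by case: le_tot. Qed.

Lemma le_madd2r a b c : le a b -> le (madd a c) (madd b c).
Proof. by case: le_term => _ [_]; apply. Qed.

Lemma le_madd2l a b c : le a b -> le (madd c a) (madd c b).
Proof. by rewrite ![madd c _]maddC; apply: le_madd2r. Qed.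

Lemma olt_madd2r a b c : olt (Some a) (Some b) -> olt (Some (madd a c)) (Some (madd b c)).
Proof.
rewrite /olt /= => ba; apply/negP => bca.
have ab : le a b by have := le_total a b; rewrite (negbTE ba) orbF.
have e : madd a c = madd b c by apply: le_anti; rewrite bca le_madd2r.
by move: ba; rewrite (maddIm e) le_refl.
Qed.

Lemma lpp0 : lpp (0 : R) = None.
Proof.
rewrite /lpp; case E: (msupp _) => [//|x s].
by have := mem_head x s; rewrite -E mem_msupp mcoef0 eqxx.
Qed.

Lemma lpp_eq0 (p : R) : lpp p = None -> p = 0.
Proof.
move/seqmax_eq_None => supp0; apply: mcoefs_eq0 => t; apply/eqP.
by rewrite -[_ == 0]negbK -mem_msupp supp0.
Qed.

Lemma mcoef_lpp_neq0 (p : R) a : lpp p = Some a -> mcoef p a != 0.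
Proof. by move/mem_seqmax; rewrite mem_msupp. Qed.

Lemma ole_lpp (p : R) t : mcoef p t != 0 -> ole (Some t) (lpp p).
Proof. by rewrite -mem_msupp; exact: seqmax_ge le_tot _ _. Qed.

Lemma lpp_max (p : R) a t : lpp p = Some a -> mcoef p t != 0 -> le t a.
Proof. by move=> pa /ole_lpp; rewrite pa. Qed.

Lemma lpp_le (p : R) z : (forall t, mcoef p t != 0 -> ole (Some t) z) -> ole (lpp p) z.
Proof. by move=> pz; apply: seqmax_le => x; rewrite mem_msupp; apply: pz. Qed.

Lemma lpp_lt (p : R) a : mcoef p a = 0 -> (forall t, mcoef p t != 0 -> le t a) ->
  olt (lpp p) (Some a).
Proof.
move=> pa0 pa; apply: (seqmax_lt le_tot); last by rewrite mem_msupp pa0 eqxx.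
by move=> x; rewrite mem_msupp; apply: pa.
Qed.

Lemma lpp_eq (p : R) a : mcoef p a != 0 -> (forall t, mcoef p t != 0 -> le t a) ->
  lpp p = Some a.
Proof.
move=> pa0 pa; case E: (lpp p) => [b|]; last by move: pa0; rewrite (lpp_eq0 E) mcoef0 eqxx.
by congr Some; apply: le_anti; rewrite (lpp_max E pa0) pa // mcoef_lpp_neq0.
Qed.

Lemma lpp_subset (p q : R) : (forall t, mcoef p t != 0 -> mcoef q t != 0) ->
  ole (lpp p) (lpp q).
Proof. by move=> pq; apply: lpp_le => t /pq /ole_lpp. Qed.

Lemma lcE (p : R) a : lpp p = Some a -> lc le p = mcoef p a.
Proof. by rewrite /lc => ->. Qed.

Lemma lpp_CX (c : K) a : c != 0 -> lpp (mconst n c * mmono K a) = Some a.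
Proof.
move=> c0; apply: lpp_eq => [|t]; rewrite mcoefCX; first by rewrite eqxx.
by case: (eqVneq t a) => [-> _|_]; rewrite ?eqxx.
Qed.

Lemma lppD_le (p q : R) z : ole (lpp p) z -> ole (lpp q) z -> ole (lpp (p + q)) z.
Proof.
move=> pz qz; apply: lpp_le => t; rewrite mcoefD.
have [pt0|pt] := eqVneq (mcoef p t) 0.
  by rewrite pt0 add0r => qt; apply: (ole_trans le_tot) (ole_lpp qt) qz.
by move=> _; apply: (ole_trans le_tot) (ole_lpp pt) pz.
Qed.

Lemma lppB_le (p q : R) z : ole (lpp p) z -> ole (lpp q) z -> ole (lpp (p - q)) z.
Proof.
move=> pz qz; apply: lppD_le => //; apply: (ole_trans le_tot) qz.
by apply: lpp_subset => t; rewrite mcoefN oppr_eq0.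
Qed.

Lemma lppM (p q : R) a b : lpp p = Some a -> lpp q = Some b ->
  lpp (p * q) = Some (madd b a) /\ mcoef (p * q) (madd b a) = mcoef p a * mcoef q b.
Proof.
move=> pa qb; have pa0 := mcoef_lpp_neq0 pa; have qb0 := mcoef_lpp_neq0 qb.
have pq_ba : mcoef (p * q) (madd b a) = mcoef p a * mcoef q b.
  apply: mcoefM_unique => // t s pt qs e.
  have bst : le (madd s t) (madd b t) by apply/le_madd2r/(lpp_max qb).
  have bta : le (madd b t) (madd b a) by apply/le_madd2l/(lpp_max pa).
  by apply: (@maddIm _ b); rewrite ![madd _ b]maddC; apply: le_anti; rewrite bta -e bst.
split=> //; apply: lpp_eq => [|x /mcoefM_neq0 [t [s [pt qs ->]]]].
  by rewrite pq_ba mulf_neq0.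
exact: le_trans (le_madd2r t (lpp_max qb qs)) (le_madd2l _ (lpp_max pa pt)).
Qed.

Lemma lppM_Some (p q : R) t : lpp (p * q) = Some t ->
  exists a b, [/\ lpp p = Some a, lpp q = Some b & t = madd b a].
Proof.
case Ep: (lpp p) => [a|]; last by rewrite (lpp_eq0 Ep) mul0r lpp0.
case Eq: (lpp q) => [b|]; last by rewrite (lpp_eq0 Eq) mulr0 lpp0.
by rewrite (proj1 (lppM Ep Eq)) => -[<-]; exists a, b.
Qed.

Lemma lppM_le (p g : R) a b : ole (lpp p) (Some a) -> lpp g = Some b ->
  ole (lpp (p * g)) (Some (madd b a)).
Proof.
case E: (lpp p) => [c|] ca gb; last by rewrite (lpp_eq0 E) mul0r lpp0.
by rewrite (proj1 (lppM E gb)) /= ![madd b _]maddC le_madd2r.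
Qed.

Lemma lppM_lt (p g : R) a b : olt (lpp p) (Some a) -> lpp g = Some b ->
  olt (lpp (p * g)) (Some (madd b a)).
Proof.
case E: (lpp p) => [c|] ca gb; last by rewrite (lpp_eq0 E) mul0r lpp0.
by rewrite (proj1 (lppM E gb)) ![madd b _]maddC olt_madd2r.
Qed.
End LeadingPowerProduct.

Section LeadingTerm.
Variables (K : fieldType) (n m : nat) (lev : rel (mon n * 'I_m)).
Hypothesis lev_term : modterm_order lev.
Local Notation R := (mp K n).
Local Notation V := (vec K n m).
Local Notation ole := (ole lev).
Local Notation lppv := (lppv lev).
Let lev_tot : total_order lev. Proof. by case: lev_term. Qed.
Let lev_anti : antisymmetric lev. Proof. by case: lev_tot. Qed.

Lemma lev_madd2r a i b j c : lev (a, i) (b, j) -> lev (madd a c, i) (madd b c, j).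
Proof. by case: lev_term => _ [_]; apply. Qed.

Lemma lev_madd a i c : lev (a, i) (madd a c, i).
Proof. by case: lev_term => _ []. Qed.

Definition oshift (s : mon n) (x : option (mon n * 'I_m)) :=
  if x is Some (b, i) then Some (madd b s, i) else None.

Lemma oshift_le s x y : ole x y -> ole (oshift s x) (oshift s y).
Proof. by case: x y => [[a i]|] [[b j]|] //=; apply: lev_madd2r. Qed.

Lemma oshiftD s r x : oshift s (oshift r x) = oshift (madd r s) x.
Proof. by case: x => [[a i]|] //=; rewrite maddA. Qed.

Lemma oshift_ge s x : ole x (oshift s x).
Proof. by case: x => [[a i]|] //=; apply: lev_madd. Qed.

Lemma scalevE (p : R) (u : V) i : scalev p u i = p * u i.
Proof. by rewrite ffunE. Qed.

Lemma mem_lppv_terms (u : V) t i :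
  ((t, i) \in [seq (t, i) | i <- enum 'I_m, t <- msupp (u i)]) = (mcoef (u i) t != 0).
Proof.
apply/allpairsPdep/idP => [[j [t' [_ ht' [-> ->]]]]|uit]; first by rewrite -mem_msupp.
by exists i, t; rewrite mem_enum mem_msupp.
Qed.

Lemma ole_lppv (u : V) t i : mcoef (u i) t != 0 -> ole (Some (t, i)) (lppv u).
Proof. by rewrite -mem_lppv_terms; apply: seqmax_ge. Qed.

Lemma lppv_le (u : V) z :
  (forall t i, mcoef (u i) t != 0 -> ole (Some (t, i)) z) -> ole (lppv u) z.
Proof. by move=> uz; apply: seqmax_le => -[t i]; rewrite mem_lppv_terms; apply: uz. Qed.

Lemma mcoef_lppv_neq0 (u : V) b i : lppv u = Some (b, i) -> mcoef (u i) b != 0.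
Proof. by move/mem_seqmax; rewrite mem_lppv_terms. Qed.

Lemma lppv_max (u : V) b i t j :
  lppv u = Some (b, i) -> mcoef (u j) t != 0 -> lev (t, j) (b, i).
Proof. by move=> ubi /ole_lppv; rewrite ubi. Qed.

Lemma lppv_eq_None (u : V) t j : lppv u = None -> mcoef (u j) t = 0.
Proof. by move=> u0; apply/eqP/negPn/negP => /ole_lppv; rewrite u0. Qed.

Lemma lppvD_le (u w : V) z : ole (lppv u) z -> ole (lppv w) z -> ole (lppv (u + w)) z.
Proof.
move=> uz wz; apply: lppv_le => t i; rewrite ffunE mcoefD.
have [ut0|ut] := eqVneq (mcoef (u i) t) 0.
  by rewrite ut0 add0r => wt; apply: (ole_trans lev_tot) (ole_lppv wt) wz.
by move=> _; apply: (ole_trans lev_tot) (ole_lppv ut) uz.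
Qed.

Lemma lppvB_le (u w : V) z : ole (lppv u) z -> ole (lppv w) z -> ole (lppv (u - w)) z.
Proof.
move=> uz wz; apply: lppvD_le => //; apply: (ole_trans lev_tot) wz.
by apply: lppv_le => t i; rewrite ffunE mcoefN oppr_eq0 => /ole_lppv.
Qed.

Lemma lppv_scale_mono_le (c : K) s (u : V) :
  ole (lppv (scalev (mconst n c * mmono K s) u)) (oshift s (lppv u)).
Proof.
apply: lppv_le => t i; rewrite scalevE -mulrA mcoefCM mcoefXM.
case: (boolP (mdiv s t)) => [s_t|]; last by rewrite mulr0 eqxx.
rewrite mulf_eq0 negb_or => /andP [_ uit].
case E: (lppv u) => [[b j]|]; last by move: uit; rewrite (lppv_eq_None _ _ E) eqxx.
by rewrite /= -(msubK s_t); apply/lev_madd2r/(lppv_max E).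
Qed.

(* Restricted to a fixed component, lev is a term order on power products, so the
   results on lpp apply componentwise. *)
Definition slice_order i : rel (mon n) := fun a b => lev (a, i) (b, i).

Lemma slice_term_order i : term_order (slice_order i).
Proof.
case: lev_term => -[lev_refl _ lev_trans lev_total] _; split; last split.
- split=> [a|a b /lev_anti [] //|b a c|a b];
    [exact: lev_refl | exact: lev_trans | exact: lev_total].
- by move=> a; have := lev_madd (mzero n) i a; rewrite madd0m.
- by move=> a b c; apply: lev_madd2r.
Qed.

Lemma lppv_scale_ge (p : R) (u : V) t : mcoef p t != 0 ->
  ole (oshift t (lppv u)) (lppv (scalev p u)).
Proof.
case E: (lppv u) => [[b i]|] // pt.
have slice_i := slice_term_order i.
have ui_b : lpp (slice_order i) (u i) = Some b.
  by apply: lpp_eq (mcoef_lppv_neq0 E) _ => // t' /(lppv_max E).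
case Ep: (lpp (slice_order i) p) => [a|]; last by move: pt; rewrite (lpp_eq0 Ep) mcoef0 eqxx.
have [_ pu_ba] := lppM slice_i Ep ui_b.
apply: (ole_trans lev_tot) (ole_lppv (t := madd b a) (i := i) _).
  by rewrite /= (maddC b t) (maddC b a); exact: lev_madd2r (lpp_max slice_i Ep pt).
by rewrite scalevE pu_ba mulf_neq0 ?(mcoef_lpp_neq0 Ep) ?(mcoef_lpp_neq0 ui_b).
Qed.

Lemma lppv_scale_subset (P p : R) (u : V) : (forall t, mcoef P t != 0 -> mcoef p t != 0) ->
  ole (lppv (scalev P u)) (lppv (scalev p u)).
Proof.
move=> Pp; apply: lppv_le => x i; rewrite scalevE => /mcoefM_neq0 [t [s [Pt us ->]]].
case E: (lppv u) => [[b j]|]; last by move: us; rewrite (lppv_eq_None _ _ E) eqxx.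
apply: (ole_trans lev_tot) (lppv_scale_ge u (Pp _ Pt)); rewrite E /=.
exact/lev_madd2r/(lppv_max E).
Qed.
End LeadingTerm.

Section SPolynomial.
Variables (K : fieldType) (n m : nat) (le : rel (mon n)) (lev : rel (mon n * 'I_m)).
Hypotheses (le_term : term_order le) (lev_term : modterm_order lev).
Local Notation R := (mp K n).
Local Notation V := (vec K n m).
Let lev_tot : total_order lev. Proof. by case: lev_term. Qed.

Lemma tfacE (g h : R) b c : lpp le g = Some b -> lpp le h = Some c ->
  tfac le g h = msub (mlcm b c) b.
Proof. by rewrite /tfac => -> ->. Qed.

Lemma lpp_tfacM (g h : R) b c : lpp le g = Some b -> lpp le h = Some c ->
  lpp le (mmono K (tfac le g h) * g) = Some (mlcm b c) /\
  mcoef (mmono K (tfac le g h) * g) (mlcm b c) = mcoef g b.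
Proof.
move=> gb hc; rewrite (tfacE gb hc).
have tb : lpp le (mmono K (msub (mlcm b c) b)) = Some (msub (mlcm b c) b).
  by rewrite -[mmono K _]mul1r -(mconst1 K n) (lpp_CX le_term _ (oner_neq0 K)).
have [] := lppM le_term tb gb; rewrite mlcm_msubK => -> ->.
by rewrite mcoefX eqxx mul1r.
Qed.

Lemma lpp_spair_lt (x y : V * R) a b : lpp le x.2 = Some a -> lpp le y.2 = Some b ->
  olt le (lpp le (spair le x y).2) (Some (mlcm a b)).
Proof.
move=> xa yb; have [xL xLc] := lpp_tfacM xa yb; have [yL yLc] := lpp_tfacM yb xa.
rewrite mlcmC in yL yLc.
have c0 : lc le x.2 / lc le y.2 != 0.
  by rewrite (lcE xa) (lcE yb) mulf_neq0 ?invr_neq0 ?(mcoef_lpp_neq0 xa) ?(mcoef_lpp_neq0 yb).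
set c := lc le x.2 / lc le y.2 in c0 *; rewrite /spair /= -/c -mulrA.
set sp := _ - _.
have sp_le : ole le (lpp le sp) (Some (mlcm a b)).
  apply: lppB_le => //; first by rewrite xL ole_refl //; apply: term_order_total.
  rewrite -yL; apply: lpp_subset => // t.
  by rewrite mcoefCM mulf_eq0 negb_or => /andP[].
apply: lpp_lt => // [|t /(ole_lpp le_term) tsp].
  rewrite mcoefB mcoefCM xLc yLc /c (lcE xa) (lcE yb) divfK ?subrr //.
  exact: mcoef_lpp_neq0 yb.
by have := ole_trans (term_order_total le_term) tsp sp_le.
Qed.

Lemma crit_pair_sym (x y : V * R) : x.2 != 0 -> y.2 != 0 ->
  is_crit_pair le lev x y || is_crit_pair le lev y x.
Proof. by move=> x0 y0; rewrite /is_crit_pair x0 y0; apply: ole_total. Qed.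

Definition spair_mull (x y : V * R) : R := mmono K (tfac le x.2 y.2).
Definition spair_mulr (x y : V * R) : R :=
  mconst n (lc le x.2 / lc le y.2) * mmono K (tfac le y.2 x.2).

Lemma spairE x y : spair le x y =
  (scalev (spair_mull x y) x.1 - scalev (spair_mulr x y) y.1,
   spair_mull x y * x.2 - spair_mulr x y * y.2).
Proof. by []. Qed.

Lemma lppv_spair_le (x y : V * R) :
  ole lev (lppv lev (spair le x y).1)
    (omax lev (oshift (tfac le x.2 y.2) (lppv lev x.1))
              (oshift (tfac le y.2 x.2) (lppv lev y.1))).
Proof.
rewrite spairE; apply: lppvB_le => //.
  rewrite /spair_mull -[mmono K _]mul1r -(mconst1 K n).
  by apply: (ole_trans lev_tot) (ole_omaxl lev_tot _ _); apply: lppv_scale_mono_le.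
by apply: (ole_trans lev_tot) (ole_omaxr lev_tot _ _); apply: lppv_scale_mono_le.
Qed.

Lemma spair_split_vec (p q M : R) (x y : V * R) :
  scalev p x.1 + scalev q y.1 =
  scalev (p - M * spair_mull x y) x.1 + scalev (q + M * spair_mulr x y) y.1 +
  scalev M (spair le x y).1.
Proof. by apply/ffunP => k; rewrite spairE !ffunE; ring. Qed.

Lemma spair_split_poly (p q M : R) (x y : V * R) :
  p * x.2 + q * y.2 =
  (p - M * spair_mull x y) * x.2 + (q + M * spair_mulr x y) * y.2 + M * (spair le x y).2.
Proof. by rewrite spairE /=; ring. Qed.
End SPolynomial.

Section PairReduction.
Variables (K : fieldType) (n m : nat) (le : rel (mon n)) (lev : rel (mon n * 'I_m)).
Hypotheses (le_term : term_order le) (lev_term : modterm_order lev).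
Local Notation R := (mp K n).
Local Notation V := (vec K n m).
Local Notation lpp := (lpp le).
Local Notation lppv := (lppv lev).
Let le_tot := term_order_total le_term.
Let lev_tot : total_order lev. Proof. by case: lev_term. Qed.

Definition tvec (q : R * (V * R)) : V := scalev q.1 q.2.1.
Definition tpoly (q : R * (V * R)) : R := q.1 * q.2.2.

Variables (G : seq (V * R)) (u : V) (p q : R) (x y : V * R) (a b c d : mon n).
Hypotheses (xG : x \in G) (yG : y \in G).
Hypotheses (pa : lpp p = Some a) (xb : lpp x.2 = Some b).
Hypotheses (qc : lpp q = Some c) (yd : lpp y.2 = Some d).
Hypothesis same_top : madd b a = madd d c.
Hypotheses (px_u : ole lev (lppv (scalev p x.1)) (lppv u))
           (qy_u : ole lev (lppv (scalev q y.1)) (lppv u)).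
Hypothesis spair_std : ole lev (lppv (scalev (spair_mull le x y) x.1)) (lppv u) ->
  std_rep le lev G (spair le x y).

Local Notation tau := (madd b a).
Local Notation s := (msub (madd b a) (mlcm b d)).
Local Notation M := (mconst n (mcoef p a) * mmono K s).

Lemma tfac_cofactor_l : madd (tfac le x.2 y.2) s = a.
Proof. by rewrite (tfacE xb yd) (mlcm_cofactor same_top). Qed.

Lemma tfac_cofactor_r : madd (tfac le y.2 x.2) s = c.
Proof.
by rewrite (tfacE yd xb) same_top [mlcm b d]mlcmC (mlcm_cofactor (esym same_top)).
Qed.

Lemma M_spair_mull : M * spair_mull le x y = mconst n (mcoef p a) * mmono K a.
Proof. by rewrite /spair_mull -mulrA -mmonoD maddC tfac_cofactor_l. Qed.

Lemma M_spair_mulr : M * spair_mulr le x y =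
  mconst n (mcoef p a * (lc le x.2 / lc le y.2)) * mmono K c.
Proof. by rewrite /spair_mulr mulrACA -mmonoD maddC tfac_cofactor_r -mconstM. Qed.

Lemma lppv_shift_l_le : ole lev (oshift a (lppv x.1)) (lppv u).
Proof. by apply: (ole_trans lev_tot) px_u; apply/lppv_scale_ge/mcoef_lpp_neq0/pa. Qed.

Lemma lppv_shift_r_le : ole lev (oshift c (lppv y.1)) (lppv u).
Proof. by apply: (ole_trans lev_tot) qy_u; apply/lppv_scale_ge/mcoef_lpp_neq0/qc. Qed.

Lemma lppv_spair_mull_le : ole lev (lppv (scalev (spair_mull le x y) x.1)) (lppv u).
Proof.
apply: (ole_trans lev_tot) lppv_shift_l_le.
rewrite -tfac_cofactor_l -oshiftD /spair_mull -[mmono K _]mul1r -(mconst1 K n).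
apply: (ole_trans lev_tot) (oshift_ge lev_term _ _).
exact: lppv_scale_mono_le.
Qed.

Lemma lppv_spair_shift_le : ole lev (oshift s (lppv (spair le x y).1)) (lppv u).
Proof.
apply: (ole_trans lev_tot) (oshift_le lev_term s (lppv_spair_le le lev_term x y)) _.
case: (omax_eq lev (oshift (tfac le x.2 y.2) (lppv x.1))
                   (oshift (tfac le y.2 x.2) (lppv y.1))) => ->.
  by rewrite oshiftD tfac_cofactor_l lppv_shift_l_le.
by rewrite oshiftD tfac_cofactor_r lppv_shift_r_le.
Qed.

Lemma lpp_shift_spair_lt (r : R) : ole le (lpp r) (lpp (spair le x y).2) ->
  olt le (lpp (M * r)) (Some tau).
Proof.
move=> r_sp; have M_s : lpp M = Some s by apply: lpp_CX => //; apply: mcoef_lpp_neq0 pa.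
have r_L := ole_olt_trans le_tot r_sp (lpp_spair_lt le_term xb yd).
by have := lppM_lt le_term r_L M_s; rewrite mulrC (maddC (msub _ _)) (mlcm_msubKr same_top).
Qed.

Lemma lpp_reduced_l_lt : olt le (lpp ((p - M * spair_mull le x y) * x.2)) (Some tau).
Proof.
apply: lppM_lt xb => //; apply: lpp_lt => // [|t]; rewrite M_spair_mull mcoefB mcoefCX.
  by rewrite eqxx subrr.
case: (eqVneq t a) => [->|_]; first by rewrite subrr eqxx.
by rewrite subr0; apply: lpp_max.
Qed.

Lemma lpp_reduced_r_le : ole le (lpp ((q + M * spair_mulr le x y) * y.2)) (Some tau).
Proof.
rewrite [X in Some X]same_top; apply: lppM_le yd => //; apply: lpp_le => // t.
rewrite M_spair_mulr mcoefD mcoefCX.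
case: (eqVneq t c) => [-> _|_]; first exact: ole_refl.
by rewrite addr0 => /(lpp_max le_term qc).
Qed.

Lemma lppv_reduced_l_le : ole lev (lppv (scalev (p - M * spair_mull le x y) x.1)) (lppv u).
Proof.
apply: (ole_trans lev_tot) px_u; apply: lppv_scale_subset => // t.
rewrite M_spair_mull mcoefB mcoefCX.
by case: (eqVneq t a) => [->|_]; rewrite ?subrr ?eqxx ?subr0.
Qed.

Lemma lppv_reduced_r_le : ole lev (lppv (scalev (q + M * spair_mulr le x y) y.1)) (lppv u).
Proof.
apply: (ole_trans lev_tot) qy_u; apply: lppv_scale_subset => // t.
rewrite M_spair_mulr mcoefD mcoefCX; case: (eqVneq t c) => [-> _|_]; rewrite ?addr0 //.
exact: mcoef_lpp_neq0 qc.
Qed.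

Lemma reduce_top_pair : exists s2 : seq (R * (V * R)),
  [/\ {in s2, forall r, r.2 \in G},
      tvec (p, x) + tvec (q, y) = \sum_(r <- s2) tvec r,
      tpoly (p, x) + tpoly (q, y) = \sum_(r <- s2) tpoly r,
      {in s2, forall r, ole lev (lppv (tvec r)) (lppv u) /\
                        ole le (lpp (tpoly r)) (Some tau)} &
      (count (fun r => lpp (tpoly r) == Some tau) s2 <= 1)%N].
Proof.
have [sq [sqG sq_vec sq_poly sq_bound]] := spair_std lppv_spair_mull_le.
have tvecM r : tvec (M * r.1, r.2) = scalev M (tvec r).
  by apply/ffunP => k; rewrite !ffunE mulrA.
have tpolyM r : tpoly (M * r.1, r.2) = M * tpoly r by rewrite /tpoly mulrA.
have sq_lt r : r \in sq -> olt le (lpp (tpoly (M * r.1, r.2))) (Some tau).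
  by move=> /sq_bound [_ r_sp]; rewrite tpolyM; apply: lpp_shift_spair_lt.
exists ((p - M * spair_mull le x y, x) :: (q + M * spair_mulr le x y, y) ::
        [seq (M * r.1, r.2) | r <- sq]); split.
- move=> r; rewrite !inE => /orP [/eqP -> //|/orP [/eqP -> //|/mapP [r' /sqG r'G ->]]].
  exact: r'G.
- rewrite !big_cons big_map /tvec /= (spair_split_vec le p q M x y) -addrA sq_vec.
  congr (_ + (_ + _)); apply/ffunP => k; rewrite ffunE !sum_ffunE mulr_sumr.
  by apply: eq_bigr => r _; rewrite !ffunE mulrA.
- rewrite !big_cons big_map /tpoly /= (spair_split_poly le p q M x y) -addrA sq_poly.
  by congr (_ + (_ + _)); rewrite mulr_sumr; apply: eq_bigr => r _; rewrite mulrA.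
- move=> r; rewrite !inE => /orP [/eqP ->|/orP [/eqP ->|/mapP [r' r'sq ->]]].
  + by split; [exact: lppv_reduced_l_le | exact/(olt_ole le_tot)/lpp_reduced_l_lt].
  + by split; [exact: lppv_reduced_r_le | exact: lpp_reduced_r_le].
  split; last exact/(olt_ole le_tot)/sq_lt.
  rewrite tvecM; apply: (ole_trans lev_tot) (lppv_scale_mono_le lev_term _ _ _) _.
  apply: (ole_trans lev_tot) lppv_spair_shift_le.
  exact/(oshift_le lev_term)/(proj1 (sq_bound _ r'sq)).
- rewrite /= (negbTE (olt_neq le_tot lpp_reduced_l_lt)) add0n count_map.
  rewrite (eq_in_count (a2 := pred0)) ?count_pred0 ?addn0 ?leq_b1 // => r /sq_lt.
  by move/(olt_neq le_tot)/negbTE.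
Qed.
End PairReduction.

Section StandardRepresentation.
Variables (K : fieldType) (n m : nat) (le : rel (mon n)) (lev : rel (mon n * 'I_m)).
Hypotheses (le_term : term_order le) (lev_term : modterm_order lev).
Local Notation R := (mp K n).
Local Notation V := (vec K n m).
Local Notation lpp := (lpp le).
Local Notation lppv := (lppv lev).
Let le_tot := term_order_total le_term.
Variables (G : seq (V * R)) (u : V) (f : R).

(* The vector half of a standard representation; the induction repairs the
   polynomial half. *)
Definition bounded_rep (s : seq (R * (V * R))) :=
  [/\ {in s, forall r, r.2 \in G}, u = \sum_(r <- s) tvec r, f = \sum_(r <- s) tpoly r &
      {in s, forall r, ole lev (lppv (tvec r)) (lppv u)}].

Definition top_count tau (s : seq (R * (V * R))) :=
  count (fun r => lpp (tpoly r) == Some tau) s.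

Definition bounded_by tau (s : seq (R * (V * R))) :=
  {in s, forall r, ole le (lpp (tpoly r)) (Some tau)}.

Definition top (s : seq (R * (V * R))) := seqmax le (pmap (fun r => lpp (tpoly r)) s).

Lemma bounded_rep_perm s s' : perm_eq s s' -> bounded_rep s -> bounded_rep s'.
Proof.
move=> ss' [sG s_u s_f s_bd]; split; rewrite -?(perm_big _ ss') //.
  by move=> r; rewrite -(perm_mem ss'); apply: sG.
by move=> r; rewrite -(perm_mem ss'); apply: s_bd.
Qed.

Lemma std_rep_of_bounded s : bounded_rep s ->
  {in s, forall r, ole le (lpp (tpoly r)) (lpp f)} -> std_rep le lev G (u, f).
Proof.
case=> sG s_u s_f s_bd s_f_bd; exists s; split=> // r rs.
by split; [apply: s_bd | apply: s_f_bd].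
Qed.

Lemma top_ge s r : r \in s -> ole le (lpp (tpoly r)) (top s).
Proof.
case E: (lpp _) => [a|] // rs; apply: seqmax_ge => //.
by rewrite mem_pmap; apply/mapP; exists r.
Qed.

Lemma top_attained s t : top s = Some t -> exists2 r, r \in s & lpp (tpoly r) = Some t.
Proof. by move/mem_seqmax; rewrite mem_pmap => /mapP [r rs ->]; exists r. Qed.

Lemma std_rep_top_None s : bounded_rep s -> top s = None -> std_rep le lev G (u, f).
Proof.
move=> rep_s s0; apply: (std_rep_of_bounded rep_s) => r /top_ge.
by rewrite s0; case: (lpp _).
Qed.

Lemma top_lt tau s : bounded_by tau s -> top_count tau s = 0%N ->
  olt le (top s) (Some tau).
Proof.
move=> bnd_s /eqP; rewrite -leqn0 leqNgt -has_count => /hasPn no_top.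
case E: (top s) => [t|] //; rewrite /olt /=; apply/negP => tau_t.
have [r rs rt] := top_attained E; have := no_top r rs; have := bnd_s r rs.
by rewrite rt => t_tau; rewrite (ole_anti le_tot t_tau tau_t) eqxx.
Qed.

Lemma two_top_terms tau s : bounded_rep s -> bounded_by tau s ->
  (0 < top_count tau s)%N -> ~~ ole le (Some tau) (lpp f) ->
  exists r0 r1 rest, [/\ perm_eq s (r0 :: r1 :: rest),
    lpp (tpoly r0) = Some tau & lpp (tpoly r1) = Some tau].
Proof.
case=> _ _ s_f _ bnd_s; rewrite -has_count => /hasP [r0 r0s /eqP r0top] tau_f.
have s_r0 := perm_to_rem r0s.
have [/hasP [r1 r1s /eqP r1top]|no_r1] :=
  boolP (has (fun r => lpp (tpoly r) == Some tau) (rem r0 s)).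
  exists r0, r1, (rem r1 (rem r0 s)); split=> //.
  by apply: perm_trans s_r0 _; rewrite perm_cons perm_to_rem.
(* otherwise only r0 contributes to the coefficient of x^tau in f *)
case/negP: tau_f; apply: ole_lpp => //.
rewrite s_f (perm_big _ s_r0) big_cons mcoefD mcoef_sum big1_seq ?addr0.
  exact: mcoef_lpp_neq0 r0top.
move=> r /andP [_ r_rest]; apply/eqP/negPn/negP => /(ole_lpp le_term) tau_r.
have rs : r \in s by rewrite (perm_mem s_r0) inE r_rest orbT.
move/hasPn: no_r1 => /(_ r r_rest); rewrite (ole_anti le_tot (bnd_s r rs) tau_r).
by rewrite eqxx.
Qed.

Hypothesis spair_std : forall x y, x \in G -> y \in G -> is_crit_pair le lev x y ->
  ole lev (lppv (scalev (mmono K (tfac le x.2 y.2)) x.1)) (lppv u) ->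
  std_rep le lev G (spair le x y).

Lemma reduce_top_count tau s r0 r1 rest : bounded_rep s -> bounded_by tau s ->
  perm_eq s (r0 :: r1 :: rest) -> lpp (tpoly r0) = Some tau -> lpp (tpoly r1) = Some tau ->
  is_crit_pair le lev r0.2 r1.2 ->
  exists s', [/\ bounded_rep s', bounded_by tau s' & (top_count tau s' < top_count tau s)%N].
Proof.
case: r0 r1 => [p x] [q y] rep_s bnd_s s_r01 r0top r1top crit.
have [sG s_u s_f s_bd] := bounded_rep_perm s_r01 rep_s.
have r0s : (p, x) \in (p, x) :: (q, y) :: rest by rewrite mem_head.
have r1s : (q, y) \in (p, x) :: (q, y) :: rest by rewrite !inE eqxx orbT.
have in_rest r : r \in rest -> r \in (p, x) :: (q, y) :: rest.
  by rewrite !inE => ->; rewrite !orbT.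
have [a [b [pa xb tau_ba]]] := lppM_Some le_term r0top.
have [c [d [qc yd tau_dc]]] := lppM_Some le_term r1top.
have [s2 [s2G s2_u s2_f s2_bd s2_top]] :=
  reduce_top_pair le_term lev_term (sG _ r0s) (sG _ r1s) pa xb qc yd
    (etrans (esym tau_ba) tau_dc) (s_bd _ r0s) (s_bd _ r1s)
    (spair_std (sG _ r0s) (sG _ r1s) crit).
rewrite -tau_ba in s2_bd s2_top.
exists (s2 ++ rest); split.
- split.
  + by move=> r; rewrite mem_cat => /orP [/s2G //|/in_rest/sG].
  + by rewrite big_cat /= -s2_u s_u !big_cons addrA.
  + by rewrite big_cat /= -s2_f s_f !big_cons addrA.
  + by move=> r; rewrite mem_cat => /orP [/s2_bd [] //|/in_rest/s_bd].
- move=> r; rewrite mem_cat => /orP [/s2_bd [] //|/in_rest r_s].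
  by apply: bnd_s; rewrite (perm_mem s_r01).
- rewrite /top_count (permP s_r01) count_cat /= r0top r1top eqxx.
  by rewrite add1n addSn ltnS add0n -add1n leq_add2r.
Qed.

Lemma std_rep_bounded_by tau s :
  bounded_rep s -> bounded_by tau s -> std_rep le lev G (u, f).
Proof.
elim/(well_founded_induction (term_order_wf le_term)): tau s => tau IHtau s.
move: {2}(top_count tau s) (leqnn (top_count tau s)) => k.
elim: k s => [|k IHk] s cnt_k rep_s bnd_s.
  have := top_lt bnd_s; rewrite leqn0 in cnt_k; move/(_ (eqP cnt_k)).
  case E: (top s) => [t|] t_tau; last exact: std_rep_top_None rep_s E.
  by apply: (IHtau t t_tau s rep_s) => r /top_ge; rewrite E.
have [cnt_le_k|cnt_gt_k] := leqP (top_count tau s) k; first exact: IHk cnt_le_k rep_s bnd_s.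
have [tau_f|tau_f] := boolP (ole le (Some tau) (lpp f)).
  apply: (std_rep_of_bounded rep_s) => r /bnd_s r_tau.
  exact: (ole_trans le_tot) tau_f.
have [r0 [r1 [rest [s_r01 r0top r1top]]]] :=
  two_top_terms rep_s bnd_s (leq_ltn_trans (leq0n k) cnt_gt_k) tau_f.
have nz (r : R * (V * R)) : lpp (tpoly r) = Some tau -> r.2.2 != 0.
  by move=> rtop; apply/eqP => r_0; move: rtop; rewrite /tpoly r_0 mulr0 lpp0.
have [s' [rep_s' bnd_s' cnt_s']] : exists s', [/\ bounded_rep s', bounded_by tau s' &
    (top_count tau s' < top_count tau s)%N].
  case/orP: (crit_pair_sym le lev_term (nz _ r0top) (nz _ r1top)) => crit.
    exact: reduce_top_count rep_s bnd_s s_r01 r0top r1top crit.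
  have s_r10 : perm_eq s (r1 :: r0 :: rest).
    by apply: perm_trans s_r01 _; rewrite (perm_catCA [:: r0] [:: r1]).
  exact: reduce_top_count rep_s bnd_s s_r10 r1top r0top crit.
by apply: (IHk s') => //; rewrite -ltnS; apply: leq_trans cnt_s' cnt_k.
Qed.

Lemma std_rep_of_bounded_rep s : bounded_rep s -> std_rep le lev G (u, f).
Proof.
move=> rep_s; case E: (top s) => [t|]; last exact: std_rep_top_None rep_s E.
by apply: (std_rep_bounded_by (tau := t) rep_s) => r /top_ge; rewrite E.
Qed.
End StandardRepresentation.

Lemma bounded_rep_unit_vectors (K : fieldType) (n m : nat) (lev : rel (mon n * 'I_m))
    (fs : 'I_m -> mp K n) (G : seq (vec K n m * mp K n))
    (u : vec K n m) (f : mp K n) :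
  modterm_order lev -> (forall i, (unitv K n i, fs i) \in G) -> inM fs (u, f) ->
  bounded_rep lev G u f [seq (u i, (unitv K n i, fs i)) | i <- enum 'I_m].
Proof.
move=> lev_term unitsG uf; split.
- by move=> r /mapP [i _ ->]; apply: unitsG.
- apply/ffunP => j; rewrite sum_ffunE big_map big_enum /= (bigD1 j) //= big1.
    by rewrite /tvec /= !ffunE eqxx mulr1 addr0.
  by move=> i /negbTE ij; rewrite /tvec /= !ffunE ij mulr0.
- by move: uf; rewrite /inM /dotv /= big_map big_enum => ->.
- move=> r /mapP [i _ ->]; apply: lppv_le => t j; rewrite /tvec /= !ffunE.
  have [<-|ij] := eqVneq i j; last by rewrite mulr0 mcoef0 eqxx.
  by rewrite mulr1; apply: ole_lppv.
Qed.

Theorem lemma2 (K : fieldType) (n m : nat)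
    (le : rel (mon n)) (lev : rel (mon n * 'I_m))
    (le_term : term_order le) (lev_term : modterm_order lev)
    (fs : 'I_m -> mp K n) (G : seq (vec K n m * mp K n))
    (u : vec K n m) (f : mp K n) :
  (forall x, x \in G -> inM fs x) ->
  (forall i : 'I_m, (unitv K n i, fs i) \in G) ->
  inM fs (u, f) ->
  (forall x y, x \in G -> y \in G -> is_crit_pair le lev x y ->
     ole lev (lppv lev (scalev (mmono K (tfac le x.2 y.2)) x.1)) (lppv lev u) ->
     std_rep le lev G (spair le x y)) ->
  std_rep le lev G (u, f).
Proof.
(* G need not lie in M: the identities of a representation are carried along. *)
move=> _ unitsG uf spair_std.
apply: (std_rep_of_bounded_rep le_term lev_term spair_std).
exact: bounded_rep_unit_vectors lev_term unitsG uf.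
Qed.
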